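(* Let $C=\sup_{\xi>0}|1-e^{-\xi}|\,|\xi|^{-1}$ and $B=\sup_{0<\xi\le\log 2}|\xi|\,|1-e^{-\xi}|^{-1}$. For probability densities $f,g$ on $\mathbb{N}$ and every $r\ge1$, $$d_r^*(f,g)\le C^r d_r(f,g)\qquad\text{and}\qquad d_r(f,g)\le\max\{2^{r+1},B^rd_r^*(f,g)\}.$$ Moreover, if $M_1(f)=M_1(g)$ and $M_r(f),M_r(g)$ are finite for some $r\in(1,2]$, then $d_r^*(f,g)\le c_r[M_r(f)+M_r(g)]$ for a suitable constant $c_r$ depending only on $r$.
   Context: For a probability density $f$ on $\mathbb{N}$: $\hat f(z)=\sum_vz^vf(v)$, $z\in[0,1]$; $\tilde f(\xi)=\sum_ve^{-\xi v}f(v)$, $\xi>0$; $M_r(f)=\sum_vv^rf(v)$. The metrics are $d_r(f,g)=\sup_{z\in(0,1)}|\hat f(z)-\hat g(z)|/|1-z|^r$ and $d_r^*(f,g)=\sup_{\xi>0}|\tilde f(\xi)-\tilde g(\xi)|/\xi^r$. *)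

From Stdlib Require Import Reals.
From Coquelicot Require Import Coquelicot.
Open Scope R_scope.

(* real power x^r for x >= 0, with the convention 0^r = 0 (r > 0);
   Stdlib's Rpower 0 r would give 1, so we special-case 0. *)
Definition rpow (x r : R) : R :=
  if Req_EM_T x 0 then 0 else Rpower x r.

Definition prob_density (f : nat -> R) : Prop :=
  (forall v, 0 <= f v) /\ is_series f 1.

Definition gen_fun (f : nat -> R) (z : R) : R := Series (fun v => z ^ v * f v).

Definition lap_fun (f : nat -> R) (xi : R) : R :=
  Series (fun v => exp (- xi * INR v) * f v).

Definition moment (r : R) (f : nat -> R) : R :=
  Series (fun v => rpow (INR v) r * f v).
Definition moment_finite (r : R) (f : nat -> R) : Prop :=
  ex_series (fun v => rpow (INR v) r * f v).

Definition d_r (r : R) (f g : nat -> R) : Rbar :=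
  Lub_Rbar (fun y => exists z, 0 < z < 1 /\
     y = Rabs (gen_fun f z - gen_fun g z) / rpow (Rabs (1 - z)) r).

Definition d_r_star (r : R) (f g : nat -> R) : Rbar :=
  Lub_Rbar (fun y => exists xi, 0 < xi /\
     y = Rabs (lap_fun f xi - lap_fun g xi) / rpow xi r).

Definition C_const : Rbar :=
  Lub_Rbar (fun y => exists xi, 0 < xi /\ y = Rabs (1 - exp (- xi)) / Rabs xi).

Definition B_const : Rbar :=
  Lub_Rbar (fun y => exists xi, 0 < xi <= ln 2 /\ y = Rabs xi / Rabs (1 - exp (- xi))).

Definition Rbar_maximum (a b : Rbar) : Rbar :=
  if Rbar_le_dec a b then b else a.

From Stdlib Require Import Reals Lra.
From Coquelicot Require Import Coquelicot.
Open Scope R_scope.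

(* Since [lap_fun f xi = gen_fun f (exp (- xi))], both comparisons amount to comparing
   the weights [|1 - z|^r] and [xi^r] under [z = exp (- xi)]: [1 - exp (- xi) <= xi]
   gives [C = 1] and the first bound, while for [z >= 1/2] the ratio [xi / (1 - z)] is
   at most [B] and for [z < 1/2] the trivial bound [|gen_fun f z - gen_fun g z| <= 1]
   applies.  For the moment bound, equal masses and first moments give
   [lap_fun f xi - lap_fun g xi = sum_v (exp (- xi v) - 1 + xi v) (f v - g v)], and
   [0 <= exp (- x) - 1 + x <= x^r] for [1 < r <= 2], so one may take [c_r = 1]. *)

Lemma Lub_Rbar_ub (E : R -> Prop) (x : R) : E x -> Rbar_le (Finite x) (Lub_Rbar E).
Proof. exact (proj1 (Lub_Rbar_correct E) x). Qed.

Lemma Lub_Rbar_least (E : R -> Prop) (b : Rbar) :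
  (forall x, E x -> Rbar_le (Finite x) b) -> Rbar_le (Lub_Rbar E) b.
Proof. exact (proj2 (Lub_Rbar_correct E) b). Qed.

Lemma Rbar_mult_pos_p_infty (c : R) : 0 < c -> Rbar_mult (Finite c) p_infty = p_infty.
Proof.
intros Hc. unfold Rbar_mult, Rbar_mult'.
destruct (Rle_dec 0 c) as [H|H]; [|lra].
destruct (Rle_lt_or_eq_dec 0 c H); [reflexivity|lra].
Qed.

Lemma Rbar_mult_1_l (x : Rbar) : Rbar_mult (Finite 1) x = x.
Proof.
destruct x as [x| |]; simpl.
- f_equal; ring.
- apply Rbar_mult_pos_p_infty; lra.
- unfold Rbar_mult, Rbar_mult'.
  destruct (Rle_dec 0 1) as [H|H]; [|lra].
  destruct (Rle_lt_or_eq_dec 0 1 H); [reflexivity|lra].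
Qed.

Lemma Rbar_le_mult_Finite (y p P : R) (X : Rbar) :
  Rbar_le (Finite y) X -> 0 <= y -> 0 <= p <= P -> 0 < P ->
  Rbar_le (Finite (y * p)) (Rbar_mult (Finite P) X).
Proof.
intros HX Hy Hp HP. destruct X as [x| |].
- simpl in *. nra.
- rewrite Rbar_mult_pos_p_infty by exact HP. exact I.
- contradiction.
Qed.

Lemma Rbar_maximum_ge_l (a b : Rbar) : Rbar_le a (Rbar_maximum a b).
Proof. unfold Rbar_maximum. destruct (Rbar_le_dec a b); [assumption|apply Rbar_le_refl]. Qed.

Lemma Rbar_maximum_ge_r (a b : Rbar) : Rbar_le b (Rbar_maximum a b).
Proof.
unfold Rbar_maximum. destruct (Rbar_le_dec a b) as [_|H]; [apply Rbar_le_refl|].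
apply Rbar_lt_le, Rbar_not_le_lt, H.
Qed.

Lemma rpow_Rpower (x r : R) : 0 < x -> rpow x r = Rpower x r.
Proof. intros H. unfold rpow. destruct (Req_EM_T x 0); [lra|reflexivity]. Qed.

Lemma rpow_0l (r : R) : rpow 0 r = 0.
Proof. unfold rpow. destruct (Req_EM_T 0 0); [reflexivity|lra]. Qed.

Lemma rpow_1l (r : R) : rpow 1 r = 1.
Proof. rewrite rpow_Rpower by lra. unfold Rpower. rewrite ln_1, Rmult_0_r. apply exp_0. Qed.

Lemma INR_le_rpow (v : nat) (r : R) : 1 <= r -> INR v <= rpow (INR v) r.
Proof.
intros Hr. destruct v as [|v].
- rewrite rpow_0l. simpl; lra.
- assert (H1 : 1 <= INR (S v)) by (rewrite S_INR; pose proof (pos_INR v); lra).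
  rewrite rpow_Rpower by lra. rewrite <- (Rpower_1 (INR (S v))) at 1 by lra.
  apply Rle_Rpower; lra.
Qed.

Lemma rpow_mult_INR (x : R) (v : nat) (r : R) :
  0 < x -> rpow (x * INR v) r = Rpower x r * rpow (INR v) r.
Proof.
intros Hx. destruct v as [|v].
- simpl. rewrite Rmult_0_r, rpow_0l. ring.
- assert (0 < INR (S v)) by apply lt_0_INR, Nat.lt_0_succ.
  rewrite !rpow_Rpower by nra. symmetry. apply Rpower_mult_distr; lra.
Qed.

Lemma exp_neg_lt_1 (x : R) : 0 < x -> exp (- x) < 1.
Proof. intros H. rewrite <- exp_0. apply exp_increasing. lra. Qed.

Lemma exp_le_compat (a b : R) : a <= b -> exp a <= exp b.
Proof.
intros [H|H]; [left; apply exp_increasing, H|rewrite H; apply Rle_refl].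
Qed.

Lemma exp_neg_le_1 (x : R) : 0 <= x -> exp (- x) <= 1.
Proof. intros H. rewrite <- exp_0. apply exp_le_compat. lra. Qed.

Lemma exp_neg_mul_1_add_le_1 (x : R) : exp (- x) * (1 + x) <= 1.
Proof.
pose proof (exp_ineq1_le x). pose proof (exp_pos (- x)).
assert (exp (- x) * exp x = 1) by (rewrite exp_Ropp; field; apply exp_neq_0).
nra.
Qed.

(* From [exp (-x) <= 1/(1+x)] and [(1+x)(1-x+x^2) = 1 + x^3 >= 1]. *)
Lemma exp_neg_le_quadratic (x : R) : 0 <= x -> exp (- x) <= 1 - x + x ^ 2.
Proof.
intros Hx. pose proof (exp_neg_mul_1_add_le_1 x). pose proof (exp_pos (- x)).
assert (0 <= x ^ 3) by (apply pow_le; lra).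
assert ((1 + x) * (1 - x + x ^ 2) = 1 + x ^ 3) by ring.
nra.
Qed.

Lemma lap_fun_gen_fun (f : nat -> R) (xi : R) : lap_fun f xi = gen_fun f (exp (- xi)).
Proof.
apply Series_ext. intros v. f_equal.
induction v as [|v IH]; simpl.
- rewrite Rmult_0_r. apply exp_0.
- rewrite <- IH, <- exp_plus. f_equal. destruct v; simpl; ring.
Qed.

Lemma gen_fun_bounds (f : nat -> R) (z : R) :
  prob_density f -> 0 <= z <= 1 -> 0 <= gen_fun f z <= 1.
Proof.
intros [Hf0 Hf1] Hz.
assert (Hterm : forall v, 0 <= z ^ v * f v <= f v).
{ intros v. pose proof (pow_le z v (proj1 Hz)). pose proof (Hf0 v).
  assert (z ^ v <= 1) by (rewrite <- (pow1 v); apply pow_incr; lra).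
  split; [apply Rmult_le_pos|]; nra. }
assert (Hex : ex_series f) by (exists 1; exact Hf1).
assert (Hexz : ex_series (fun v => z ^ v * f v)).
{ apply (ex_series_le (fun v => z ^ v * f v) f); [|exact Hex].
  intros v. rewrite Rabs_pos_eq; apply Hterm. }
unfold gen_fun. split.
- rewrite <- (Rmult_0_l (Series (fun v => z ^ v * f v))), <- Series_scal_l.
  apply Series_le; [|exact Hexz].
  intros v. pose proof (Hterm v). lra.
- rewrite <- (is_series_unique f 1 Hf1). apply Series_le; [exact Hterm|exact Hex].
Qed.

(* The ratio tends to 1 at 0: [1 - exp (-x) >= x - x^2] squeezes it into [[1 - x, 1]]. *)
Lemma C_const_eq_1 : C_const = Finite 1.
Proof.
apply is_lub_Rbar_unique. split.
- intros y [xi [Hxi ->]]. simpl.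
  pose proof (exp_ineq1_le (- xi)). pose proof (exp_neg_lt_1 xi Hxi).
  rewrite Rabs_pos_eq, (Rabs_pos_eq xi) by lra.
  apply Rmult_le_reg_r with xi; [lra|].
  unfold Rdiv. rewrite Rmult_assoc, Rinv_l by lra. lra.
- intros [b| |] Hb; simpl; trivial.
  + destruct (Rle_lt_dec 1 b) as [Hb1|Hb1]; [exact Hb1|exfalso].
    set (xi := (1 - b) / 2).
    assert (Hxi : 0 < xi) by (unfold xi; lra).
    assert (Hy : Rabs (1 - exp (- xi)) / Rabs xi <= b)
      by (apply (Hb (Finite _)); exists xi; split; trivial).
    pose proof (exp_neg_le_quadratic xi (Rlt_le _ _ Hxi)).
    pose proof (exp_neg_lt_1 xi Hxi).
    rewrite Rabs_pos_eq, (Rabs_pos_eq xi) in Hy by lra.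
    apply Rmult_le_compat_r with (r := xi) in Hy; [|lra].
    unfold Rdiv in Hy. rewrite Rmult_assoc, Rinv_l, Rmult_1_r in Hy by lra.
    unfold xi in *. nra.
  + apply (Hb (Rabs (1 - exp (- 1)) / Rabs 1)). exists 1. split; [lra|reflexivity].
Qed.

Lemma B_const_ub (xi : R) :
  0 < xi <= ln 2 -> xi / (1 - exp (- xi)) <= real B_const.
Proof.
set (E := fun y => exists xi, 0 < xi <= ln 2 /\ y = Rabs xi / Rabs (1 - exp (- xi))).
assert (HE : forall xi, 0 < xi <= ln 2 -> E (xi / (1 - exp (- xi)))).
{ intros x Hx. exists x. pose proof (exp_neg_lt_1 x (proj1 Hx)).
  split; [exact Hx|]. rewrite !Rabs_pos_eq by lra. reflexivity. }
assert (Hfin : Rbar_le (Lub_Rbar E) (Finite (1 + ln 2))).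
{ apply Lub_Rbar_least. intros y [x [Hx ->]]. simpl.
  pose proof (exp_neg_lt_1 x (proj1 Hx)). pose proof (exp_neg_mul_1_add_le_1 x).
  rewrite !Rabs_pos_eq by lra.
  apply Rmult_le_reg_r with (1 - exp (- x)); [lra|].
  unfold Rdiv. rewrite Rmult_assoc, Rinv_l by lra. nra. }
intros Hxi. unfold B_const. fold E.
pose proof (Lub_Rbar_ub E _ (HE xi Hxi)) as Hub.
destruct (Lub_Rbar E); simpl in *; tauto.
Qed.

Lemma d_r_star_le_d_r (f g : nat -> R) (r : R) :
  0 <= r -> Rbar_le (d_r_star r f g) (d_r r f g).
Proof.
intros Hr. apply Lub_Rbar_least. intros y [xi [Hxi ->]].
set (z := exp (- xi)).
assert (Hz : 0 < z < 1) by (split; [apply exp_pos|apply exp_neg_lt_1, Hxi]).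
apply Rbar_le_trans
  with (Finite (Rabs (gen_fun f z - gen_fun g z) / rpow (Rabs (1 - z)) r)).
- simpl. rewrite !lap_fun_gen_fun. fold z.
  rewrite (Rabs_pos_eq (1 - z)), !rpow_Rpower by lra.
  apply Rmult_le_compat_l; [apply Rabs_pos|].
  apply Rinv_le_contravar; [apply exp_pos|].
  apply Rle_Rpower_l; [exact Hr|].
  pose proof (exp_ineq1_le (- xi)). unfold z in *. split; lra.
- apply Lub_Rbar_ub. exists z. split; [exact Hz|reflexivity].
Qed.

Lemma d_r_le_max (f g : nat -> R) (r : R) :
  prob_density f -> prob_density g -> 1 <= r ->
  Rbar_le (d_r r f g)
    (Rbar_maximum (Finite (rpow 2 (r + 1)))
                  (Rbar_mult (Finite (rpow (real B_const) r)) (d_r_star r f g))).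
Proof.
intros Hf Hg Hr. apply Lub_Rbar_least. intros y [z [Hz ->]].
set (A := Rabs (gen_fun f z - gen_fun g z)).
assert (HA : 0 <= A <= 1).
{ pose proof (gen_fun_bounds f z Hf ltac:(lra)).
  pose proof (gen_fun_bounds g z Hg ltac:(lra)).
  split; [apply Rabs_pos|apply Rabs_le; lra]. }
rewrite (Rabs_pos_eq (1 - z)), rpow_Rpower by lra.
assert (HP : 0 < Rpower (1 - z) r) by apply exp_pos.
destruct (Rlt_le_dec z (1 / 2)) as [Hz2|Hz2].
- eapply Rbar_le_trans; [|apply Rbar_maximum_ge_l]. simpl. rewrite rpow_Rpower by lra.
  assert (HK : 1 <= Rpower 2 (r + 1) * Rpower (1 - z) r).
  { apply Rle_trans with (Rpower 2 r * Rpower (1 - z) r).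
    - rewrite Rpower_mult_distr by lra.
      rewrite <- (Rpower_O (2 * (1 - z))) at 1 by lra. apply Rle_Rpower; lra.
    - apply Rmult_le_compat_r; [lra|]. apply Rle_Rpower; lra. }
  apply Rmult_le_reg_r with (Rpower (1 - z) r); [exact HP|].
  unfold Rdiv. rewrite Rmult_assoc, Rinv_l by lra. lra.
- set (xi := - ln z).
  assert (Hexp : exp (- xi) = z) by (unfold xi; rewrite Ropp_involutive; apply exp_ln; lra).
  assert (Hxi : 0 < xi <= ln 2).
  { unfold xi. split.
    - assert (ln z < 0) by (rewrite <- ln_1; apply ln_increasing; lra). lra.
    - pose proof (ln_le (/ 2) z ltac:(lra) ltac:(lra)). rewrite ln_Rinv in H by lra. lra. }
  pose proof (B_const_ub xi Hxi) as Hb. rewrite Hexp in Hb.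
  set (beta := xi / (1 - z)) in *.
  assert (Hbeta : 0 < beta) by (apply Rdiv_lt_0_compat; lra).
  assert (Hmul : Rpower beta r * Rpower (1 - z) r = Rpower xi r).
  { rewrite Rpower_mult_distr by lra. f_equal. unfold beta. field. lra. }
  assert (0 < Rpower beta r) by apply exp_pos.
  replace (A / Rpower (1 - z) r) with (A / Rpower xi r * Rpower beta r)
    by (rewrite <- Hmul; field; lra).
  eapply Rbar_le_trans; [|apply Rbar_maximum_ge_r].
  rewrite rpow_Rpower by lra.
  apply Rbar_le_mult_Finite.
  + apply Lub_Rbar_ub. exists xi. split; [apply Hxi|].
    rewrite !lap_fun_gen_fun, Hexp, rpow_Rpower by apply Hxi. reflexivity.
  + apply Rdiv_le_0_compat; [lra|apply exp_pos].
  + split; [lra|]. apply Rle_Rpower_l; lra.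
  + apply exp_pos.
Qed.

Lemma exp_neg_sub_1_add_bounds (x r : R) :
  0 <= x -> 1 < r <= 2 -> 0 <= exp (- x) - 1 + x <= rpow x r.
Proof.
intros Hx Hr. pose proof (exp_ineq1_le (- x)). split; [lra|].
destruct (Req_dec x 0) as [->|Hx0].
{ rewrite rpow_0l, Ropp_0, exp_0. lra. }
rewrite rpow_Rpower by lra.
destruct (Rle_lt_dec x 1) as [Hx1|Hx1].
- pose proof (exp_neg_le_quadratic x Hx).
  assert (x ^ 2 <= Rpower x r).
  { rewrite <- (Rpower_pow 2 x) by lra. apply exp_le_compat.
    assert (ln x <= 0) by (rewrite <- ln_1; apply ln_le; lra).
    simpl INR. nra. }
  lra.
- pose proof (exp_neg_le_1 x Hx).
  assert (x <= Rpower x r).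
  { rewrite <- (Rpower_1 x) at 1 by lra. apply Rle_Rpower; lra. }
  lra.
Qed.

Lemma Rabs_Series_le (a b : nat -> R) (l : R) :
  (forall n, Rabs (a n) <= b n) -> is_series b l -> Rabs (Series a) <= l.
Proof.
intros Hab Hb. assert (Hexb : ex_series b) by (exists l; exact Hb).
apply Rle_trans with (Series (fun n => Rabs (a n))).
- apply Series_Rabs. apply (ex_series_le (fun n => Rabs (a n)) b); [|exact Hexb].
  intros n. rewrite Rabs_Rabsolu. apply Hab.
- rewrite <- (is_series_unique b l Hb). apply Series_le; [|exact Hexb].
  intros n. split; [apply Rabs_pos|apply Hab].
Qed.

Lemma ex_series_first_moment (h : nat -> R) (r : R) :
  1 <= r -> prob_density h -> moment_finite r h -> ex_series (fun v => INR v * h v).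
Proof.
intros Hr [Hh _] Hm. apply (ex_series_le (fun v => INR v * h v) _ ) with (2 := Hm).
intros v. pose proof (pos_INR v). pose proof (Hh v). pose proof (INR_le_rpow v r Hr).
rewrite Rabs_pos_eq by nra. apply Rmult_le_compat_r; lra.
Qed.

Lemma ex_series_lap (h : nat -> R) (xi : R) :
  prob_density h -> 0 < xi -> ex_series (fun v => exp (- xi * INR v) * h v).
Proof.
intros [Hh Hh1] Hxi.
apply (ex_series_le (fun v => exp (- xi * INR v) * h v) h); [|exists 1; exact Hh1].
intros v. pose proof (pos_INR v). pose proof (Hh v).
pose proof (exp_pos (- xi * INR v)).
assert (exp (- xi * INR v) <= 1) by (rewrite <- Ropp_mult_distr_l; apply exp_neg_le_1; nra).
rewrite Rabs_pos_eq by nra. nra.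
Qed.

Lemma moment_1 (h : nat -> R) : moment 1 h = Series (fun v => INR v * h v).
Proof.
apply Series_ext. intros [|v].
- rewrite rpow_0l. simpl; ring.
- assert (0 < INR (S v)) by apply lt_0_INR, Nat.lt_0_succ.
  rewrite rpow_Rpower, Rpower_1 by lra. reflexivity.
Qed.

Section LaplaceSecondOrder.

Variables (f g : nat -> R) (r : R).
Hypotheses (Hf : prob_density f) (Hg : prob_density g) (Hr : 1 < r <= 2).
Hypotheses (Hmf : moment_finite r f) (Hmg : moment_finite r g).
Hypothesis (Hm1 : moment 1 f = moment 1 g).

Lemma is_series_lap_diff (xi : R) : 0 < xi ->
  is_series (fun v => (exp (- (xi * INR v)) - 1 + xi * INR v) * (f v - g v))
            (lap_fun f xi - lap_fun g xi).
Proof.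
intros Hxi. destruct Hf as [_ Hf1]. destruct Hg as [_ Hg1].
pose proof (Series_correct _ (ex_series_lap f xi Hf Hxi)) as Hlf.
pose proof (Series_correct _ (ex_series_lap g xi Hg Hxi)) as Hlg.
pose proof (Series_correct _ (ex_series_first_moment f r ltac:(lra) Hf Hmf)) as HMf.
pose proof (Series_correct _ (ex_series_first_moment g r ltac:(lra) Hg Hmg)) as HMg.
rewrite !moment_1 in Hm1. rewrite Hm1 in HMf.
pose proof (is_series_plus _ _ _ _
  (is_series_minus _ _ _ _ (is_series_minus _ _ _ _ Hlf Hlg) (is_series_minus _ _ _ _ Hf1 Hg1))
  (is_series_scal_l xi _ _ (is_series_minus _ _ _ _ HMf HMg))) as Hsum.
unfold lap_fun. replace (Series _ - Series _) with
  (Series (fun v => exp (- xi * INR v) * f v) - Series (fun v => exp (- xi * INR v) * g v)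
   - (1 - 1) + xi * (Series (fun v => INR v * g v) - Series (fun v => INR v * g v))) by ring.
apply (is_series_ext _ _ _) with (2 := Hsum). intros v.
unfold plus, minus, opp, scal; simpl. unfold mult; simpl.
replace (- (xi * INR v)) with (- xi * INR v) by ring. ring.
Qed.

Lemma Rabs_lap_diff_le_moments (xi : R) : 0 < xi ->
  Rabs (lap_fun f xi - lap_fun g xi) <= Rpower xi r * (moment r f + moment r g).
Proof.
intros Hxi. rewrite <- (is_series_unique _ _ (is_series_lap_diff xi Hxi)).
apply Rabs_Series_le
  with (b := fun v => Rpower xi r * (rpow (INR v) r * f v + rpow (INR v) r * g v)).
- intros v. destruct Hf as [Hf0 _]. destruct Hg as [Hg0 _].
  pose proof (pos_INR v). pose proof (Hf0 v). pose proof (Hg0 v).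
  pose proof (exp_neg_sub_1_add_bounds (xi * INR v) r ltac:(nra) Hr) as Hh.
  rewrite rpow_mult_INR in Hh by exact Hxi.
  rewrite Rabs_mult, (Rabs_pos_eq (exp _ - 1 + _)) by lra.
  apply Rle_trans with ((exp (- (xi * INR v)) - 1 + xi * INR v) * (f v + g v)).
  + apply Rmult_le_compat_l; [lra|]. apply Rabs_le. lra.
  + replace (Rpower xi r * (rpow (INR v) r * f v + rpow (INR v) r * g v))
      with (Rpower xi r * rpow (INR v) r * (f v + g v)) by ring.
    apply Rmult_le_compat_r; lra.
- exact (is_series_scal_l _ _ _
    (is_series_plus _ _ _ _ (Series_correct _ Hmf) (Series_correct _ Hmg))).
Qed.

End LaplaceSecondOrder.

Lemma d_r_star_le_moments (f g : nat -> R) (r : R) :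
  prob_density f -> prob_density g -> 1 < r <= 2 ->
  moment 1 f = moment 1 g -> moment_finite r f -> moment_finite r g ->
  Rbar_le (d_r_star r f g) (Finite (moment r f + moment r g)).
Proof.
intros Hf Hg Hr Hm1 Hmf Hmg. apply Lub_Rbar_least. intros y [xi [Hxi ->]]. simpl.
pose proof (Rabs_lap_diff_le_moments f g r Hf Hg Hr Hmf Hmg Hm1 xi Hxi).
assert (0 < Rpower xi r) by apply exp_pos.
rewrite rpow_Rpower by exact Hxi.
apply Rmult_le_reg_r with (Rpower xi r); [lra|].
unfold Rdiv. rewrite Rmult_assoc, Rinv_l by lra. lra.
Qed.

Theorem lemmaA5 :
  (forall (f g : nat -> R) (r : R), prob_density f -> prob_density g -> 1 <= r ->
     Rbar_le (d_r_star r f g) (Rbar_mult (Finite (rpow (real C_const) r)) (d_r r f g)) /\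
     Rbar_le (d_r r f g)
       (Rbar_maximum (Finite (rpow 2 (r + 1)))
                     (Rbar_mult (Finite (rpow (real B_const) r)) (d_r_star r f g)))) /\
  (forall r : R, 1 < r <= 2 ->
     exists c : R, forall f g : nat -> R,
       prob_density f -> prob_density g ->
       moment 1 f = moment 1 g ->
       moment_finite r f -> moment_finite r g ->
       Rbar_le (d_r_star r f g) (Finite (c * (moment r f + moment r g)))).
Proof.
split.
- intros f g r Hf Hg Hr. split.
  + rewrite C_const_eq_1. simpl real. rewrite rpow_1l, Rbar_mult_1_l.
    apply d_r_star_le_d_r. lra.
  + apply d_r_le_max; assumption.
- intros r Hr. exists 1. intros f g Hf Hg Hm1 Hmf Hmg.
  rewrite Rmult_1_l. apply d_r_star_le_moments; assumption.
Qed.
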